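(* Let $k\in\mathbb N$ be odd. Then the polynomial $2^{2(k-1)}(a^k-b^k)^2-(a-b)^{2k}\in\mathbb R[a,b]$ is a sum of squares of polynomials (of degree at most $k$). *)

From HB Require Import structures.
From mathcomp Require Import all_boot all_order all_algebra.
From mathcomp Require Import reals.
From mathcomp Require Import mpoly.
Set Implicit Arguments. Unset Strict Implicit. Unset Printing Implicit Defensive.
Import Order.TTheory GRing.Theory Num.Theory.
Local Open Scope ring_scope.

(* p is a sum of squares of polynomials, each of total degree at most d
   (msize q = total degree + 1, and msize 0 = 0). *)
Definition sos_deg_le (R : nzRingType) (n d : nat) (p : {mpoly R[n]}) : Prop :=
  exists s : seq {mpoly R[n]},
    all (fun q => (msize q <= d.+1)%N) s /\ p = \sum_(q <- s) q ^+ 2.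

Definition pk (R : nzRingType) (k : nat) : {mpoly R[2]} :=
  let a := 'X_(0 : 'I_2) in
  let b := 'X_(1 : 'I_2) in
  2 ^+ (2 * (k - 1)) * (a ^+ k - b ^+ k) ^+ 2 - (a - b) ^+ (2 * k).

From mathcomp Require Import all_boot all_order all_algebra.
From mathcomp Require Import reals.
From mathcomp Require Import mpoly.
From mathcomp Require Import zify ring.
Set Implicit Arguments. Unset Strict Implicit. Unset Printing Implicit Defensive.
Import GRing.Theory Num.Theory.
Local Open Scope ring_scope.

(* Put u = a + b and v = a - b.  By the binomial theorem,
   2^(k-1) (a^k - b^k) = ((u + v)^k - (u - v)^k) / 2 = T + v^k, where T is the sum
   of the terms C(k,i) u^(k-i) v^i over the odd i < k.  So for odd k the polynomial
   equals T^2 + 2 v^k T, and each term 2 C(k,i) u^(k-i) v^(k+i) of 2 v^k T has even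
   exponents, hence is the square of a real multiple of u^((k-i)/2) v^((k+i)/2).
   All these polynomials are homogeneous of degree k. *)

Section OddBinomialPart.
Variable R : comPzRingType.
Implicit Types u v : R.

Definition odd_binomial_sum (k m : nat) u v : R :=
  \sum_(i < m | odd i) 'C(k, i)%:R * u ^+ (k - i) * v ^+ i.

Lemma exprD_subr_exprB u v k :
  (u + v) ^+ k - (u - v) ^+ k = 2 * odd_binomial_sum k k.+1 u v.
Proof.
rewrite exprDn exprBn -sumrB /odd_binomial_sum mulr_sumr.
rewrite (bigID (fun i : 'I_k.+1 => odd i)) /=.
rewrite [X in _ + X]big1 ?addr0 => [|i /negbTE even_i]; last first.
  by rewrite -signr_odd even_i expr0; ring.
by apply: eq_bigr => i odd_i; rewrite -signr_odd odd_i expr1; ring.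
Qed.

Lemma odd_binomial_sumS u v k : odd k ->
  odd_binomial_sum k k.+1 u v = odd_binomial_sum k k u v + v ^+ k.
Proof.
move=> odd_k; rewrite /odd_binomial_sum big_mkcond big_ord_recr -big_mkcond /=.
by rewrite odd_k subnn binn expr0 !mul1r.
Qed.

Lemma sqr_odd_binomial_sum_subr u v k : odd k ->
  odd_binomial_sum k k.+1 u v ^+ 2 - v ^+ (2 * k) =
  odd_binomial_sum k k u v ^+ 2 +
  \sum_(i < k | odd i) 'C(k, i).*2%:R * u ^+ (k - i) * v ^+ (k + i).
Proof.
move=> odd_k; rewrite odd_binomial_sumS // mulnC exprM.
have -> : forall t w : R, (t + w) ^+ 2 - w ^+ 2 = t ^+ 2 + 2 * w * t.
  by move=> t w; ring.
congr (_ + _); rewrite /odd_binomial_sum mulr_sumr; apply: eq_bigr => i _.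
by rewrite exprD -mul2n natrM; ring.
Qed.

End OddBinomialPart.

Lemma subrXX_odd_binomial (R : idomainType) (a b : R) k : 2 != 0 :> R ->
  (0 < k)%N ->
  2 ^+ (k - 1) * (a ^+ k - b ^+ k) = odd_binomial_sum k k.+1 (a + b) (a - b).
Proof.
move=> two_neq0 k_gt0; apply: (mulfI two_neq0); rewrite -exprD_subr_exprB.
have -> : a + b + (a - b) = 2 * a by ring.
have -> : a + b - (a - b) = 2 * b by ring.
by rewrite !exprMn mulrA -exprS subn1 prednK // mulrBr.
Qed.

Section DegreeBounds.
Variables (R : idomainType) (n : nat).
Implicit Types p q : {mpoly R[n]}.

Lemma msize_mul_deg_le p q i j : (msize p <= i.+1)%N -> (msize q <= j.+1)%N ->
  (msize (p * q) <= (i + j).+1)%N.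
Proof.
have [->|p_neq0] := eqVneq p 0; first by rewrite mul0r msize0.
have [->|q_neq0] := eqVneq q 0; first by rewrite mulr0 msize0.
by rewrite msizeM //; lia.
Qed.

Lemma msize_exp_deg_le p i e : (msize p <= i.+1)%N -> (msize (p ^+ e) <= (i * e).+1)%N.
Proof.
move=> size_p; elim: e => [|e IHe]; first by rewrite expr0 msize1 muln0.
by rewrite exprS mulnS; apply: msize_mul_deg_le.
Qed.

Lemma msize_sum_le (I : Type) (r : seq I) (P : pred I) (F : I -> {mpoly R[n]}) d :
  (forall i, P i -> msize (F i) <= d)%N -> (msize (\sum_(i <- r | P i) F i) <= d)%N.
Proof.
move=> size_F; apply: (big_ind (fun p => msize p <= d)%N) => // [|p q size_p size_q].
  by rewrite msize0.
by rewrite (leq_trans (msizeD_le _ _)) // geq_max size_p.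
Qed.

Lemma msize_binomial_term_le c p q e f : (msize p <= 2)%N -> (msize q <= 2)%N ->
  (msize (c%:MP * (p ^+ e * q ^+ f)) <= (e + f).+1)%N.
Proof.
move=> size_p size_q; rewrite mul_mpolyC.
apply: leq_trans (msizeZ_le _ _) _.
by have := msize_mul_deg_le (msize_exp_deg_le e size_p) (msize_exp_deg_le f size_q); rewrite !mul1n.
Qed.

Lemma msize_odd_binomial_sum_le k m p q : (m <= k.+1)%N ->
  (msize p <= 2)%N -> (msize q <= 2)%N ->
  (msize (odd_binomial_sum k m p q) <= k.+1)%N.
Proof.
move=> le_mk size_p size_q; apply: msize_sum_le => i _.
rewrite -mulrA -mpolyC_nat (leq_trans (msize_binomial_term_le _ _ _ size_p size_q)) //.
by rewrite subnK // -ltnS (leq_trans (ltn_ord i)).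
Qed.

End DegreeBounds.

Lemma mpolyC_sqrt_sqr (R : rcfType) n (c : R) (p : {mpoly R[n]}) : 0 <= c ->
  c%:MP * p ^+ 2 = ((Num.sqrt c)%:MP * p) ^+ 2.
Proof. by move=> c_ge0; rewrite exprMn -rmorphXn /= sqr_sqrtr. Qed.

Theorem mainTheorem17 (R : realType) (k : nat) (hk : odd k) :
  sos_deg_le k (pk R k).
Proof.
rewrite /sos_deg_le /pk; set a := 'X_(_); set b := 'X_(_).
have size_X (i : 'I_2) : (msize ('X_i : {mpoly R[2]}) <= 2)%N by rewrite msizeX mdeg1.
have size_u : (msize (a + b) <= 2)%N.
  by rewrite (leq_trans (msizeD_le _ _)) // geq_max !size_X.
have size_v : (msize (a - b) <= 2)%N.
  by rewrite (leq_trans (msizeD_le _ _)) // geq_max msizeN !size_X.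
pose root i := (Num.sqrt ('C(k, i).*2%:R : R))%:MP *
  ((a + b) ^+ ((k - i)./2) * (a - b) ^+ ((k + i)./2)).
exists (odd_binomial_sum k k (a + b) (a - b) ::
        [seq root i | i <- index_iota 0 k & odd i]); split.
  rewrite /= all_map msize_odd_binomial_sum_le //=.
  apply/allP => i; rewrite mem_filter mem_index_iota => /andP[_ /andP[_ lt_ik]].
  by rewrite /= (leq_trans (msize_binomial_term_le _ _ _ size_u size_v)) //; lia.
have two_neq0 : 2 != 0 :> {mpoly R[2]}.
  by rewrite -mpolyC_nat mpolyC_eq0 pnatr_eq0.
have k_gt0 : (0 < k)%N by rewrite lt0n; apply: contraTneq hk => ->.
rewrite mulnC exprM -exprMn subrXX_odd_binomial // sqr_odd_binomial_sum_subr //.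
rewrite big_cons big_map big_filter big_mkord; congr (_ + _).
apply: eq_bigr => i odd_i; have lt_ik := ltn_ord i.
rewrite /root -mpolyC_sqrt_sqr ?ler0n // mpolyC_nat exprMn -!exprM !muln2.
by rewrite !halfK oddD (oddB (ltnW lt_ik)) hk odd_i !subn0 mulrA.
Qed.
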